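(* If $S$ is a cyclotomic numerical semigroup, then $S$ is symmetric.
   Context: A numerical semigroup is a submonoid $S$ of $(\mathbb N,+)$ with $\mathbb N\setminus S$ finite; its Frobenius number $\mathrm F(S)$ is the largest integer not in $S$. $S$ is symmetric if $S\cup(\mathrm F(S)-S)=\mathbb Z$, where $\mathrm F(S)-S=\{\mathrm F(S)-s: s\in S\}$. The semigroup polynomial is $\mathrm P_S(x)=(1-x)\sum_{s\in S}x^s$, and $S$ is cyclotomic if $\mathrm P_S$ (a monic integer polynomial) has all its complex roots in the closed unit disc. *)

From mathcomp Require Import all_boot all_order all_algebra all_field.
Set Implicit Arguments. Unset Strict Implicit. Unset Printing Implicit Defensive.
Import Order.TTheory GRing.Theory Num.Theory.
Local Open Scope ring_scope.

Definition numerical_semigroup (S : nat -> bool) : Prop :=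
  [/\ S 0%N,
      (forall a b, S a -> S b -> S (a + b)%N) &
      exists N : nat, forall n, (N <= n)%N -> S n].

Definition inS (S : nat -> bool) (z : int) : bool :=
  (0 <= z) && S `|z|%N.

Definition is_frobenius (S : nat -> bool) (f : int) : Prop :=
  ~~ inS S f /\ (forall z : int, f < z -> inS S z).

Definition symmetric_ns (S : nat -> bool) : Prop :=
  exists f : int, is_frobenius S f /\
    forall z : int, inS S z \/ exists s : nat, S s /\ z = f - s%:Z.

(* Coefficient of x^i in (1 - x) * sum_{s in S} x^s :
   [i in S] - [i - 1 in S]. *)
Definition sg_coef (S : nat -> bool) (i : nat) : algC :=
  (S i)%:R - ((0 < i)%N && S i.-1)%:R.

(* Truncation of the power series (1 - x) sum_{s in S} x^s to degree < N;
   when every n >= N.-1 lies in S, all coefficients of degree >= N vanish,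
   so this is exactly the semigroup polynomial P_S. *)
Definition sg_poly (S : nat -> bool) (N : nat) : {poly algC} :=
  \poly_(i < N) sg_coef S i.

Definition cyclotomic_ns (S : nat -> bool) : Prop :=
  forall N : nat, (forall n, (N <= n)%N -> S n) ->
    forall z : algC, root (sg_poly S N.+1) z -> `|z| <= 1.

From mathcomp Require Import all_boot all_order all_algebra all_field zify.
Set Implicit Arguments. Unset Strict Implicit. Unset Printing Implicit Defensive.
Import Order.TTheory GRing.Theory Num.Theory.
Local Open Scope ring_scope.

(* P_S is monic with constant term 1 and real coefficients.  The product of
   its roots has modulus |P_S(0)| = 1, so roots lying in the closed unit disc
   lie on the unit circle, where z^-1 = conj z; hence the roots are closed
   under inversion and P_S is self-reciprocal.  If m is the conductor of S,
   the palindromy of the coefficients [i \in S] - [i - 1 \in S] of P_S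
   telescopes to [i \in S] + [m - 1 - i \in S] = 1, which is the symmetry of S
   with Frobenius number m - 1. *)

Lemma prodr_ile1_eq1 (R : numDomainType) (r : seq R) :
  (forall x, x \in r -> 0 <= x <= 1) -> \prod_(x <- r) x = 1 ->
  forall x, x \in r -> x = 1.
Proof.
elim: r => [|a r IHr] r01 //; rewrite big_cons => prod1 x.
have /andP[a_ge0 a_le1] := r01 a (mem_head a r).
have r01' y : y \in r -> 0 <= y <= 1 by move=> ry; apply: r01; rewrite inE ry orbT.
have prodr_le1 : \prod_(y <- r) y <= 1.
  by rewrite big_seq prodr_ile1 // => y /r01' /andP[].
have a1 : a = 1.
  apply/eqP; rewrite eq_le a_le1 /= -{1}prod1 -{2}[a]mulr1.
  exact: ler_wpM2l.
rewrite inE => /orP[/eqP -> // | xr].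
by apply: IHr => //; move: prod1; rewrite a1 mul1r.
Qed.

Lemma horner_prod_XsubC_inv (F : fieldType) (r : seq F) (x : F) :
  x != 0 -> (forall z, z \in r -> z != 0) ->
  x ^+ size r * (\prod_(z <- r) ('X - z%:P)).[x^-1] =
  (\prod_(z <- r) - z) * (\prod_(z <- r) ('X - (z^-1)%:P)).[x].
Proof.
move=> x_nz; elim: r => [|a r IHr] r_nz; first by rewrite !big_nil expr0 !hornerE.
have a_nz : a != 0 by apply: r_nz; rewrite mem_head.
rewrite !big_cons !hornerM exprS mulrACA IHr; last first.
  by move=> z zr; apply: r_nz; rewrite inE zr orbT.
rewrite [RHS]mulrACA !hornerXsubC; congr (_ * _).
by rewrite mulrBr mulfV // mulrBr !mulNr mulfV // opprK addrC mulrC.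
Qed.

Lemma horner_nz_eq0 (F : numFieldType) (p : {poly F}) :
  (forall x, x != 0 -> p.[x] = 0) -> p = 0.
Proof.
move=> p0; pose rs := [seq i.+1%:R | i <- iota 0 (size p)] : seq F.
apply: (@roots_geq_poly_eq0 _ p rs); last by rewrite size_map size_iota.
- by rewrite all_map; apply/allP => i _ /=; apply/rootP/p0; rewrite pnatr_eq0.
- by rewrite map_inj_uniq ?iota_uniq // => i j /eqP; rewrite eqr_nat => /eqP[].
Qed.

Lemma coef_sym_of_reciprocal (F : numFieldType) (p : {poly F}) (m : nat) :
  size p = m.+1 -> (forall x, x != 0 -> x ^+ m * p.[x^-1] = p.[x]) ->
  forall i, (i <= m)%N -> p`_i = p`_(m - i).
Proof.
move=> size_p p_rec; pose q := \poly_(i < m.+1) p`_(m - i).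
suff def_p : q = p by move=> i le_im; rewrite -{1}def_p coef_poly ltnS le_im.
apply/eqP; rewrite -subr_eq0; apply/eqP; apply: horner_nz_eq0 => x x_nz.
rewrite hornerD hornerN -p_rec // horner_poly horner_coef size_p mulr_sumr.
rewrite (reindex_inj rev_ord_inj) /=; apply/eqP; rewrite subr_eq0; apply/eqP.
apply: eq_bigr => j _; have le_jm : (j <= m)%N by rewrite -ltnS.
rewrite subSS subKn // mulrCA exprVn; congr (_ * _).
by rewrite expfB_cond ?(negPf x_nz).
Qed.

Section DiscRoots.

Variables (C : numClosedFieldType) (p : {poly C}).
Hypotheses (p_monic : p \is monic) (p0 : p.[0] = 1).
Hypothesis p_disc : forall z, root p z -> `|z| <= 1.

Lemma roots_norm1_of_disc z : root p z -> `|z| = 1.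
Proof.
have [r def_p] := closed_field_poly_normal p.
rewrite (monicP p_monic) scale1r in def_p.
have r01 y : y \in map Num.norm r -> 0 <= y <= 1.
  by case/mapP=> w wr ->; rewrite normr_ge0 p_disc // def_p root_prod_XsubC.
have prod1 : \prod_(y <- map Num.norm r) y = 1.
  have p0_norm : `|p.[0]| = 1 by rewrite p0 normr1.
  rewrite big_map -[RHS]p0_norm def_p horner_prod normr_prod.
  by apply: eq_bigr => w _; rewrite hornerXsubC sub0r normrN.
rewrite def_p root_prod_XsubC => zr.
exact: prodr_ile1_eq1 r01 prod1 _ (map_f Num.norm zr).
Qed.

Hypothesis p_real : map_poly Num.conj p = p.

Lemma reciprocal_of_disc_roots x :
  x != 0 -> x ^+ (size p).-1 * p.[x^-1] = p.[x].
Proof.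
move=> x_nz; have [r def_p] := closed_field_poly_normal p.
rewrite (monicP p_monic) scale1r in def_p.
have r_norm1 z : z \in r -> `|z| = 1.
  by move=> zr; apply: roots_norm1_of_disc; rewrite def_p root_prod_XsubC.
have r_nz z : z \in r -> z != 0.
  by move/r_norm1 => z1; rewrite -normr_eq0 z1 oner_neq0.
have prod_opp : \prod_(z <- r) - z = 1.
  rewrite -[RHS]p0 def_p horner_prod; apply: eq_bigr => z _.
  by rewrite hornerXsubC sub0r.
have prod_inv : \prod_(z <- r) ('X - (z^-1)%:P) = p.
  rewrite -[RHS]p_real def_p rmorph_prod big_seq [RHS]big_seq.
  apply: eq_bigr => z zr; rewrite rmorphB /= map_polyX map_polyC /=.
  by rewrite invC_norm r_norm1 // expr1n invr1 mul1r.
have -> : (size p).-1 = size r by rewrite def_p size_prod_XsubC.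
rewrite [p in p.[x^-1]]def_p horner_prod_XsubC_inv //.
by rewrite prod_opp mul1r prod_inv.
Qed.

End DiscRoots.

Lemma numerical_semigroup_conductor (S : nat -> bool) :
  numerical_semigroup S ->
  exists2 m : nat, (forall n, (m <= n)%N -> S n) & ((0 < m)%N -> ~~ S m.-1).
Proof.
case=> _ _ [N SN].
(* A decidable form of "every n >= k lies in S", so that ex_minn applies. *)
pose P k := [forall i : 'I_N, (k <= i)%N ==> S i].
have PS k : P k -> forall n, (k <= n)%N -> S n.
  move=> /forallP Pk n le_kn; have [lt_nN | ] := ltnP n N; last exact: SN.
  by have := Pk (Ordinal lt_nN); rewrite le_kn.
have exP : exists k, P k by exists N; apply/forallP => i; rewrite leqNgt ltn_ord.
case: (ex_minnP exP) => m Pm m_min; exists m; first exact: PS.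
move=> m_gt0; apply: contraT; rewrite negbK => Sm1.
suff /m_min : P m.-1 by lia.
apply/forallP => i; apply/implyP => le_m1i.
have [lt_im | ] := ltnP i m; last exact: PS.
by have -> : nat_of_ord i = m.-1 by lia.
Qed.

Section Conductor.

Variables (S : nat -> bool) (m : nat).
Hypotheses (S_ge : forall n, (m <= n)%N -> S n) (S_gap : (0 < m)%N -> ~~ S m.-1).

Lemma sg_coef_conductor : sg_coef S m = 1.
Proof.
rewrite /sg_coef S_ge //; case: (posnP m) => [-> | m_gt0] /=; first by rewrite subr0.
by rewrite (negPf (S_gap m_gt0)) subr0.
Qed.

Lemma size_sg_poly : size (sg_poly S m.+1) = m.+1.
Proof. by rewrite size_poly_eq //= sg_coef_conductor oner_neq0. Qed.

Lemma sg_poly_monic : sg_poly S m.+1 \is monic.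
Proof. by rewrite monicE lead_coef_poly //= sg_coef_conductor ?oner_neq0. Qed.

Lemma symmetric_of_gap_duality :
  (forall i, (i < m)%N -> S i = ~~ S (m.-1 - i)) -> symmetric_ns S.
Proof.
move=> dual; have S_gt z : m%:Z - 1 < z -> inS S z.
  by move=> lt_z; rewrite /inS; apply/andP; split; [lia | apply: S_ge; lia].
exists (m%:Z - 1); split.
  split=> //; rewrite /inS; apply/negP => /andP[ge0 Sf].
  have m_gt0 : (0 < m)%N by lia.
  by move: Sf; rewrite (_ : `|(m%:Z - 1)%R|%N = m.-1) ?(negPf (S_gap m_gt0)) //; lia.
move=> z; have [/S_gt | le_z] := ltP (m%:Z - 1) z; first by left.
have [lt_z0 | ge_z0] := ltP z 0.
  by right; exists `|(m%:Z - 1 - z)%R|%N; split; [apply: S_ge | ]; lia.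
case Sz : (S `|z|%N); first by left; rewrite /inS Sz andbT.
right; exists (m.-1 - `|z|)%N; split; last by lia.
by rewrite -[S _]negbK -dual ?Sz //; lia.
Qed.

Hypothesis S0 : S 0.

Lemma sg_poly_horner0 : (sg_poly S m.+1).[0] = 1.
Proof. by rewrite horner_coef0 coef_poly /= /sg_coef S0 subr0. Qed.

Lemma sg_poly_real : map_poly Num.conj (sg_poly S m.+1) = sg_poly S m.+1.
Proof.
apply/polyP => i; rewrite coef_map /= coef_poly; case: ifP => _.
  by rewrite /sg_coef rmorphB /= !conjC_nat.
by rewrite rmorph0.
Qed.

Lemma sg_coef_eq {i j} : sg_coef S i = sg_coef S j ->
  (S i + ((0 < j) && S j.-1) = S j + ((0 < i) && S i.-1))%N.
Proof.
rewrite /sg_coef => /eqP; rewrite subr_eq addrAC eq_sym subr_eq -!natrD.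
by rewrite eqr_nat => /eqP.
Qed.

Lemma sg_gap_duality :
  (forall i, (i <= m)%N -> sg_coef S i = sg_coef S (m - i)) ->
  forall i, (i < m)%N -> S i = ~~ S (m.-1 - i).
Proof.
move=> sym i lt_im; suff : (S i + S (m.-1 - i) = 1)%N.
  by case: (S i); case: (S _).
elim: i lt_im => [|i IHi] lt_im; first by rewrite S0 subn0 (negPf (S_gap _)) //; lia.
have := sg_coef_eq (sym i.+1 (ltnW lt_im)).
have -> : (m - i.+1 = m.-1 - i)%N by lia.
have -> : ((m.-1 - i).-1 = m.-1 - i.+1)%N by lia.
have -> /= : (0 < m.-1 - i)%N by lia.
have := IHi (ltnW lt_im); lia.
Qed.

End Conductor.

Theorem theorem1 (S : nat -> bool) :
  numerical_semigroup S -> cyclotomic_ns S -> symmetric_ns S.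
Proof.
move=> S_ns S_cyc; have S0 : S 0 by case: S_ns.
have [m S_ge S_gap] := numerical_semigroup_conductor S_ns.
apply: (symmetric_of_gap_duality S_ge S_gap).
apply: (sg_gap_duality S_gap S0) => i le_im.
have := reciprocal_of_disc_roots (sg_poly_monic S_ge S_gap)
  (sg_poly_horner0 m S0) (S_cyc m S_ge) (sg_poly_real S m).
rewrite size_sg_poly // => sg_rec.
have := coef_sym_of_reciprocal (size_sg_poly S_ge S_gap) sg_rec le_im.
by rewrite !coef_poly ltnS le_im ltnS leq_subr.
Qed.
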